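(* There exist absolute constants $C,c>0$ such that for every integer $v\ge0$ and real $\lambda\ge\frac12$: \begin{enumerate} \item $c(v+\lambda)^{-1}\exp(\Psi_{v,\lambda}-\lambda)\le(-1)^vA_{v,\lambda}\le C(v+\lambda)\exp(\Psi_{v,\lambda}-\lambda)$ and $c(v+\lambda)^{-1}\exp(\Psi_{v,\lambda}+\lambda)\le B_{v,\lambda}\le C(v+\lambda)\exp(\Psi_{v,\lambda}+\lambda)$; \item if moreover $v\le\lambda$, then $c(v+\lambda)^{-1}\exp(\Psi_{v,\lambda}-\lambda)\le(-1)^vA_{v,\lambda}\le C\lambda^{-1/2}\exp(\Psi_{v,\lambda}-\lambda)$. \end{enumerate}
   Context: For integer $v\ge0$ and real $\lambda>0$ define $A_{v,\lambda}=2e^{-\lambda}(-1)^v\sum_{n\ge v,\ n-v\in2\mathbb{Z}}\frac{\lambda^n}{2^n n!}\binom{n}{(n-v)/2}$ and $B_{v,\lambda}=2e^{\lambda}\sum_{n\ge v,\ n-v\in2\mathbb{Z}}\frac{\lambda^n}{2^n n!}\binom{n}{(n-v)/2}$, and $\Psi_{v,\lambda}=\sqrt{v^2+\lambda^2}+v\log\Big(\frac{\sqrt{v^2+\lambda^2}-v}{\lambda}\Big)$ (natural logarithm). *)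

From Stdlib Require Import Reals.
From Coquelicot Require Import Coquelicot.
Open Scope R_scope.

(* The inner sum  sum_{n >= v, n - v even} lambda^n / (2^n n!) * binom(n, (n-v)/2),
   reindexed by n = v + 2k (k >= 0), so that (n-v)/2 = k. *)
Definition inner_term (v : nat) (lam : R) (k : nat) : R :=
  let n := (v + 2 * k)%nat in
  lam ^ n / (2 ^ n * INR (Factorial.fact n)) * Binomial.C n k.

Definition inner_sum (v : nat) (lam : R) : R := Series (inner_term v lam).

Definition A_coef (v : nat) (lam : R) : R :=
  2 * exp (- lam) * (-1) ^ v * inner_sum v lam.

Definition B_coef (v : nat) (lam : R) : R :=
  2 * exp lam * inner_sum v lam.

Definition Psi (v : nat) (lam : R) : R :=
  sqrt (INR v ^ 2 + lam ^ 2)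
  + INR v * ln ((sqrt (INR v ^ 2 + lam ^ 2) - INR v) / lam).

From Stdlib Require Import Reals Lra Lia Psatz.
From Coquelicot Require Import Coquelicot.
Open Scope R_scope.

(* With s = sqrt (v^2 + lam^2), X = (s + v)/2 and Y = (s - v)/2 one has X Y = lam^2/4 and
   e^Psi = e^(X+Y) ((s - v)/lam)^v, and the term n = v + 2k of the sum factors as
   e^Psi P_X(v + k) P_Y(k) with Poisson weights P_Z(j) = Z^j e^-Z / j!.  Hence the sum is e^Psi
   times the probability that two independent Poisson variables of means X and Y differ by v.
   The elementary Stirling bounds e^(1/(2n)) <= n!^2 e^(2n) / n^(2n+1) <= e^2 show that P_Z(j)
   is at most min (1, sqrt (2/Z)) and, at j = floor Z, at least (e^4 (Z + 1))^(-1/2).  The first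
   bounds the probability above by max_j P_X(j) with X >= lam/2, the second bounds it below by
   its term k = floor Y, and (X + 1)(Y + 1) <= 9 (v + lam)^2.  A and B differ from the sum only
   by the factor 2 e^(-+lam). *)

Lemma exp_le_exp (a b : R) : a <= b -> exp a <= exp b.
Proof.
  intros [Hlt|Heq]; [left; exact (exp_increasing _ _ Hlt) | rewrite Heq; right; reflexivity].
Qed.

Lemma pow_exp_ln (q : R) (n : nat) : 0 < q -> q ^ n = exp (INR n * ln q).
Proof. intro Hq. rewrite <- Rpower_pow by exact Hq. reflexivity. Qed.

Lemma exp_mult_INR (a : R) (n : nat) : exp (INR n * a) = exp a ^ n.
Proof. rewrite pow_exp_ln, ln_exp by apply exp_pos. reflexivity. Qed.

Lemma is_series_exp (x : R) :
  is_series (fun k => x ^ k / INR (Factorial.fact k)) (exp x).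
Proof.
  generalize (is_exp_Reals x). apply is_series_ext. intro n. rewrite pow_n_pow. reflexivity.
Qed.

Lemma ln_1p_ge (u : R) : 0 <= u -> 2 * u / (2 + u) <= ln (1 + u).
Proof.
  intro Hu.
  pose (f t := ln (1 + t) - 2 * t / (2 + t)).
  destruct (MVT_gen f 0 u (fun t => t ^ 2 / ((1 + t) * (2 + t) ^ 2))) as [c [Hc Hf]];
    rewrite Rmin_left, Rmax_right in * by lra.
  - intros x Hx. unfold f. auto_derive. lra. field. lra.
  - intros x Hx. apply derivable_continuous_pt, ex_derive_Reals_0. unfold f. auto_derive. lra.
  - assert (0 <= c ^ 2 / ((1 + c) * (2 + c) ^ 2)).
    { apply Rdiv_le_0_compat. nra. apply Rmult_lt_0_compat; nra. }
    unfold f in Hf. rewrite Rplus_0_r, ln_1, Rmult_0_r, Rdiv_0_l in Hf. nra.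
Qed.

Lemma ln_1p_le (u : R) : 0 <= u -> ln (1 + u) <= u * (6 + u) / (6 + 4 * u).
Proof.
  intro Hu.
  pose (f t := t * (6 + t) / (6 + 4 * t) - ln (1 + t)).
  destruct (MVT_gen f 0 u (fun t => 4 * t ^ 3 / ((1 + t) * (6 + 4 * t) ^ 2))) as [c [Hc Hf]];
    rewrite Rmin_left, Rmax_right in * by lra.
  - intros x Hx. unfold f. auto_derive. lra. field. lra.
  - intros x Hx. apply derivable_continuous_pt, ex_derive_Reals_0. unfold f. auto_derive. lra.
  - assert (0 <= 4 * c ^ 3 / ((1 + c) * (6 + 4 * c) ^ 2)).
    { apply Rdiv_le_0_compat. assert (0 <= c ^ 3) by (apply pow_le; lra). lra.
      apply Rmult_lt_0_compat; nra. }
    unfold f in Hf. rewrite !Rplus_0_r, ln_1, Rmult_0_l, Rdiv_0_l in Hf. nra.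
Qed.

Lemma pow_1p_inv_ge (n : nat) : (1 <= n)%nat ->
  exp 2 <= (1 + / INR n) ^ (2 * n + 1).
Proof.
  intro Hn. assert (HN : 1 <= INR n) by exact (le_INR 1 n Hn).
  assert (Hu : 0 < / INR n) by (apply Rinv_0_lt_compat; lra).
  rewrite pow_exp_ln by lra. apply exp_le_exp.
  rewrite plus_INR, mult_INR. simpl (INR 2). simpl (INR 1).
  apply Rle_trans with ((2 * INR n + 1) * (2 * / INR n / (2 + / INR n))).
  - right. field. lra.
  - apply Rmult_le_compat_l. lra. apply ln_1p_ge. lra.
Qed.

Lemma pow_1p_inv_le (n : nat) : (1 <= n)%nat ->
  (1 + / INR n) ^ (2 * n + 1) <= exp (2 + / (2 * INR n) - / (2 * (INR n + 1))).
Proof.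
  intro Hn. assert (HN : 1 <= INR n) by exact (le_INR 1 n Hn).
  assert (Hu : 0 < / INR n) by (apply Rinv_0_lt_compat; lra).
  rewrite pow_exp_ln by lra. apply exp_le_exp.
  rewrite plus_INR, mult_INR. simpl (INR 2). simpl (INR 1).
  apply Rle_trans with ((2 * INR n + 1) * (/ INR n * (6 + / INR n) / (6 + 4 * / INR n))).
  { apply Rmult_le_compat_l. lra. apply ln_1p_le. lra. }
  set (N := INR n) in *.
  replace ((2 * N + 1) * (/ N * (6 + / N) / (6 + 4 * / N))) with (2 + / (N * (6 * N + 4)))
    by (field; split; lra).
  assert (/ (N * (6 * N + 4)) <= / (2 * N * (N + 1))) by (apply Rinv_le_contravar; nra).
  assert (/ (2 * N) - / (2 * (N + 1)) = / (2 * N * (N + 1))) by (field; lra).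
  lra.
Qed.

Definition stirling_ratio (n : nat) : R :=
  INR (Factorial.fact n) ^ 2 * exp (2 * INR n) / INR n ^ (2 * n + 1).

Lemma stirling_ratio_1 : stirling_ratio 1 = exp 2.
Proof.
  unfold stirling_ratio. change (INR (Factorial.fact 1)) with 1. change (INR 1) with 1.
  rewrite Rmult_1_r, pow1, pow1. field.
Qed.

Lemma stirling_ratio_S (n : nat) : (1 <= n)%nat ->
  stirling_ratio (S n) = stirling_ratio n * exp 2 / (1 + / INR n) ^ (2 * n + 1).
Proof.
  intro Hn. assert (HN : 1 <= INR n) by exact (le_INR 1 n Hn).
  unfold stirling_ratio.
  replace (2 * S n + 1)%nat with (2 * n + 1 + 2)%nat by lia.
  rewrite fact_simpl, mult_INR, S_INR, pow_add.
  replace (INR n + 1) with ((1 + / INR n) * INR n) by (field; lra).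
  rewrite !Rpow_mult_distr.
  replace (2 * ((1 + / INR n) * INR n)) with (2 * INR n + 2) by (field; lra).
  rewrite exp_plus.
  assert (0 < / INR n) by (apply Rinv_0_lt_compat; lra).
  field. repeat split; try lra; apply pow_nonzero; lra.
Qed.

Lemma stirling_ratio_le (n : nat) : (1 <= n)%nat -> stirling_ratio n <= exp 2.
Proof.
  induction 1 as [|n Hn IH]; [rewrite stirling_ratio_1; lra|].
  rewrite stirling_ratio_S by exact Hn.
  assert (Hp := pow_1p_inv_ge n Hn). assert (He := exp_pos 2).
  assert (0 <= stirling_ratio n).
  { unfold stirling_ratio. apply Rdiv_le_0_compat.
    apply Rmult_le_pos; [apply pow_le, pos_INR | apply Rlt_le, exp_pos].
    apply pow_lt. apply (lt_INR 0); lia. }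
  apply Rle_trans with (stirling_ratio n); [|exact IH].
  apply Rmult_le_reg_r with ((1 + / INR n) ^ (2 * n + 1)); [lra|].
  unfold Rdiv. rewrite Rmult_assoc, Rinv_l by lra. nra.
Qed.

Lemma stirling_ratio_ge (n : nat) : (1 <= n)%nat -> exp (/ (2 * INR n)) <= stirling_ratio n.
Proof.
  induction 1 as [|n Hn IH].
  { rewrite stirling_ratio_1. apply exp_le_exp. simpl. lra. }
  rewrite stirling_ratio_S by exact Hn.
  assert (Hp := pow_1p_inv_le n Hn). assert (Hp0 := pow_1p_inv_ge n Hn).
  assert (He := exp_pos 2).
  rewrite S_INR.
  replace (exp (/ (2 * (INR n + 1))))
    with (exp (/ (2 * INR n)) * exp 2 / exp (2 + / (2 * INR n) - / (2 * (INR n + 1)))).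
  2:{ unfold Rdiv. rewrite <- exp_plus, <- exp_Ropp, <- exp_plus. f_equal. ring. }
  unfold Rdiv. apply Rmult_le_compat.
  - apply Rmult_le_pos; apply Rlt_le, exp_pos.
  - apply Rlt_le, Rinv_0_lt_compat, exp_pos.
  - apply Rmult_le_compat_r; lra.
  - apply Rinv_le_contravar; lra.
Qed.

Definition poisson (X : R) (j : nat) : R := X ^ j * exp (- X) / INR (Factorial.fact j).

Lemma poisson_ge0 (X : R) (j : nat) : 0 <= X -> 0 <= poisson X j.
Proof.
  intro HX. unfold poisson. apply Rdiv_le_0_compat; [|apply INR_fact_lt_0].
  apply Rmult_le_pos; [apply pow_le, HX | apply Rlt_le, exp_pos].
Qed.

Lemma is_series_poisson (X : R) : is_series (poisson X) 1.
Proof.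
  rewrite <- (Rinv_l (exp X)) by apply Rgt_not_eq, exp_pos.
  apply (is_series_ext (fun j => / exp X * (X ^ j / INR (Factorial.fact j)))).
  - intro j. change (/ exp X * (X ^ j / INR (Factorial.fact j)) = poisson X j :> R).
    unfold poisson. rewrite exp_Ropp. field.
    split; [apply Rgt_not_eq, exp_pos | apply INR_fact_neq_0].
  - exact (is_series_scal_l (/ exp X) _ _ (is_series_exp X)).
Qed.

Lemma poisson_S (X : R) (j : nat) : poisson X (S j) = poisson X j * X / INR (S j).
Proof.
  unfold poisson. rewrite fact_simpl, mult_INR. simpl (X ^ S j).
  field. split; [apply INR_fact_neq_0 | apply not_0_INR; lia].
Qed.

Lemma poisson_le_S (X : R) (j : nat) : INR (S j) <= X -> poisson X j <= poisson X (S j).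
Proof.
  intro HX. assert (0 < INR (S j)) by (apply lt_0_INR; lia).
  assert (0 <= poisson X j) by (apply poisson_ge0; lra).
  rewrite poisson_S. apply Rmult_le_reg_r with (INR (S j)); [lra|].
  unfold Rdiv. rewrite Rmult_assoc, Rinv_l by lra. nra.
Qed.

Lemma poisson_le_mono (X : R) (i j : nat) :
  INR j <= X -> (i <= j)%nat -> poisson X i <= poisson X j.
Proof.
  intros HX. induction 1 as [|j Hij IH]; [lra|].
  apply Rle_trans with (poisson X j); [|apply poisson_le_S, HX].
  apply IH. rewrite S_INR in HX. lra.
Qed.

(* For fixed j, the weight X ^ j e^(-X) is largest at X = j, since t <= e^(t - 1). *)
Lemma poisson_le_param_INR (X : R) (j : nat) : 0 <= X -> poisson X j <= poisson (INR j) j.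
Proof.
  intro HX. unfold poisson.
  apply Rmult_le_compat_r; [apply Rlt_le, Rinv_0_lt_compat, INR_fact_lt_0|].
  destruct j as [|n].
  { simpl. rewrite !Rmult_1_l, Ropp_0, exp_0. rewrite <- exp_0. apply exp_le_exp. lra. }
  set (N := INR (S n)). assert (HN : 0 < N) by (apply lt_0_INR; lia).
  set (t := X / N). assert (Ht : 0 <= t) by (apply Rdiv_le_0_compat; lra).
  assert (Hpow : t ^ S n <= exp (X - N)).
  { replace (X - N) with (N * (t - 1)) by (unfold t; field; lra).
    unfold N. rewrite exp_mult_INR. apply pow_incr.
    generalize (exp_ineq1_le (t - 1)). lra. }
  replace X with (t * N) at 1 by (unfold t; field; lra).
  rewrite Rpow_mult_distr.
  replace (exp (- N)) with (exp (X - N) * exp (- X)) by (rewrite <- exp_plus; f_equal; ring).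
  rewrite (Rmult_comm (t ^ S n)), !Rmult_assoc.
  apply Rmult_le_compat_l; [apply pow_le; lra|].
  apply Rmult_le_compat_r; [apply Rlt_le, exp_pos | exact Hpow].
Qed.

Lemma poisson_INR_sq (n : nat) : (1 <= n)%nat ->
  poisson (INR n) n ^ 2 = / (INR n * stirling_ratio n).
Proof.
  intro Hn. assert (HN : 1 <= INR n) by exact (le_INR 1 n Hn).
  unfold poisson, stirling_ratio.
  assert (HE : exp (2 * INR n) = / exp (- INR n) ^ 2).
  { rewrite <- exp_mult_INR, <- exp_Ropp. f_equal. simpl. ring. }
  rewrite HE. replace (2 * n + 1)%nat with (n + n + 1)%nat by lia.
  rewrite !pow_add.
  assert (0 < exp (- INR n)) by apply exp_pos.
  assert (INR (Factorial.fact n) <> 0) by apply INR_fact_neq_0.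
  field. repeat split; try lra; apply pow_nonzero; lra.
Qed.

Lemma poisson_sq_le_inv (X : R) (n : nat) : 0 <= X -> (1 <= n)%nat ->
  poisson X n ^ 2 <= / INR n.
Proof.
  intros HX Hn. assert (HN : 1 <= INR n) by exact (le_INR 1 n Hn).
  apply Rle_trans with (poisson (INR n) n ^ 2).
  { apply pow_incr. split; [apply poisson_ge0, HX | apply poisson_le_param_INR, HX]. }
  rewrite poisson_INR_sq by exact Hn.
  assert (1 <= stirling_ratio n).
  { apply Rle_trans with (exp (/ (2 * INR n))); [|apply stirling_ratio_ge, Hn].
    rewrite <- exp_0. apply exp_le_exp, Rlt_le, Rinv_0_lt_compat. lra. }
  apply Rinv_le_contravar; nra.
Qed.

Lemma poisson_le_1 (X : R) (j : nat) : 0 <= X -> poisson X j <= 1.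
Proof.
  intro HX. destruct j as [|n].
  - unfold poisson. simpl. rewrite Rmult_1_l, Rdiv_1_r, <- exp_0. apply exp_le_exp. lra.
  - assert (H := poisson_sq_le_inv X (S n) HX ltac:(lia)).
    assert (H0 := poisson_ge0 X (S n) HX).
    assert (HN : 1 <= INR (S n)) by (apply (le_INR 1); lia).
    assert (/ INR (S n) <= 1) by (rewrite <- Rinv_1; apply Rinv_le_contravar; lra).
    nra.
Qed.

(* For X > 2 the index n = floor(X/2) + 1 satisfies X/2 < n <= X: weights below n are
   dominated by the weight at n by monotonicity, weights above X/2 by [poisson_sq_le_inv]. *)
Lemma poisson_sq_le (X : R) (j : nat) : 0 < X -> poisson X j ^ 2 <= 2 / X.
Proof.
  intro HX.
  assert (H0 := poisson_ge0 X j ltac:(lra)). assert (H1 := poisson_le_1 X j ltac:(lra)).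
  destruct (Rle_lt_dec X 2) as [HX2|HX2].
  { assert (1 <= 2 / X).
    { apply Rmult_le_reg_r with X; [lra|]. unfold Rdiv. rewrite Rmult_assoc, Rinv_l; lra. }
    nra. }
  replace (2 / X) with (/ (X / 2)) by (field; lra).
  destruct (Rle_lt_dec (X / 2) (INR j)) as [Hj|Hj].
  - assert (Hj1 : (1 <= j)%nat) by (apply (INR_le 1); simpl; lra).
    apply Rle_trans with (/ INR j); [apply poisson_sq_le_inv; [lra | exact Hj1]|].
    apply Rinv_le_contravar; lra.
  - destruct (nfloor_ex (X / 2) ltac:(lra)) as [n Hn].
    assert (HnX : INR (S n) <= X) by (rewrite S_INR; lra).
    apply Rle_trans with (poisson X (S n) ^ 2).
    { apply pow_incr. split; [exact H0|].
      apply poisson_le_mono; [exact HnX|]. apply INR_le. rewrite S_INR. lra. }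
    apply Rle_trans with (/ INR (S n)); [apply poisson_sq_le_inv; [lra | lia]|].
    apply Rinv_le_contravar; [lra|]. rewrite S_INR. lra.
Qed.

Lemma poisson_INR_sq_ge (m : nat) : / (exp 2 * (INR m + 1)) <= poisson (INR m) m ^ 2.
Proof.
  assert (He2 := exp_pos 2).
  destruct m as [|n].
  - replace (poisson (INR 0) 0) with 1 by (unfold poisson; simpl; rewrite Ropp_0, exp_0; field).
    change (INR 0) with 0. rewrite Rplus_0_l, Rmult_1_r, pow1, <- Rinv_1.
    apply Rinv_le_contravar; [lra|].
    rewrite <- exp_0. apply exp_le_exp. lra.
  - assert (HN : 1 <= INR (S n)) by (apply (le_INR 1); lia).
    rewrite poisson_INR_sq by lia.
    assert (Hs := stirling_ratio_le (S n) ltac:(lia)).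
    assert (0 < stirling_ratio (S n)).
    { apply Rlt_le_trans with (exp (/ (2 * INR (S n)))); [apply exp_pos | apply stirling_ratio_ge; lia]. }
    apply Rinv_le_contravar; nra.
Qed.

Lemma poisson_floor_sq_ge (Z : R) (m : nat) : INR m <= Z < INR m + 1 ->
  / (exp 4 * (Z + 1)) <= poisson Z m ^ 2.
Proof.
  intros [HmZ HZm]. assert (Hm := pos_INR m).
  assert (Hlow : poisson (INR m) m * exp (- 1) <= poisson Z m).
  { unfold poisson, Rdiv. rewrite (Rmult_comm _ (exp (-1))), <- !Rmult_assoc.
    apply Rmult_le_compat_r; [apply Rlt_le, Rinv_0_lt_compat, INR_fact_lt_0|].
    rewrite (Rmult_comm (exp (-1))), Rmult_assoc, <- exp_plus.
    apply Rmult_le_compat; [apply pow_le; lra | apply Rlt_le, exp_pos | apply pow_incr; lra |].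
    apply exp_le_exp. lra. }
  assert (H0 := poisson_ge0 (INR m) m Hm).
  assert (Hsq := poisson_INR_sq_ge m).
  apply Rle_trans with ((poisson (INR m) m * exp (- 1)) ^ 2);
    [|apply pow_incr; split; [apply Rmult_le_pos; [lra | apply Rlt_le, exp_pos] | exact Hlow]].
  rewrite Rpow_mult_distr.
  replace (exp 4) with (exp 2 * / exp (- 1) ^ 2).
  2:{ rewrite <- exp_mult_INR, <- exp_Ropp, <- exp_plus. f_equal. simpl. ring. }
  assert (0 < exp (- 1) ^ 2) by (apply pow_lt, exp_pos).
  assert (0 < exp 2) by apply exp_pos.
  apply Rle_trans with (/ (exp 2 * (Z + 1)) * exp (- 1) ^ 2).
  { right. assert (0 < exp (- 1)) by apply exp_pos. field. repeat split; lra. }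
  apply Rmult_le_compat_r; [lra|].
  apply Rle_trans with (/ (exp 2 * (INR m + 1))); [|exact Hsq].
  apply Rinv_le_contravar; nra.
Qed.

Lemma Series_ge0 (a : nat -> R) : (forall n, 0 <= a n) -> ex_series a -> 0 <= Series a.
Proof.
  intros Ha Hex.
  replace 0 with (Series (fun _ => 0 * 1)) by (rewrite Series_scal_l; ring).
  apply Series_le; [intro n; rewrite Rmult_0_l; split; [lra | apply Ha] | exact Hex].
Qed.

Lemma Series_ge_term (a : nat -> R) (n : nat) :
  (forall k, 0 <= a k) -> ex_series a -> a n <= Series a.
Proof.
  intros Ha Hex. rewrite (Series_incr_n a (S n)) by (lia || exact Hex). simpl pred.
  assert (0 <= Series (fun k => a (S n + k)%nat)).
  { apply Series_ge0; [intro k; apply Ha | exact (proj1 (ex_series_incr_n a (S n)) Hex)]. }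
  assert (a n <= sum_f_R0 a n).
  { destruct n as [|n]; simpl; [lra|].
    assert (0 <= sum_f_R0 a n) by (apply cond_pos_sum, Ha). lra. }
  lra.
Qed.

Definition skellam (X Y : R) (v : nat) : R :=
  Series (fun k => poisson X (v + k) * poisson Y k).

Section Skellam.

Variables (X Y : R) (v : nat).
Hypotheses (HX : 0 <= X) (HY : 0 <= Y).

Lemma skellam_term_ge0 (k : nat) : 0 <= poisson X (v + k) * poisson Y k.
Proof. apply Rmult_le_pos; apply poisson_ge0; assumption. Qed.

Lemma ex_series_skellam : ex_series (fun k => poisson X (v + k) * poisson Y k).
Proof.
  apply (@ex_series_le R_AbsRing R_CompleteNormedModule _ (poisson Y)).
  - intro k. unfold norm; simpl; unfold abs; simpl.
    rewrite Rabs_pos_eq by apply skellam_term_ge0.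
    rewrite <- (Rmult_1_l (poisson Y k)) at 2.
    apply Rmult_le_compat_r; [apply poisson_ge0, HY | apply poisson_le_1, HX].
  - exists 1. apply is_series_poisson.
Qed.

Lemma skellam_le (M : R) : (forall j, poisson X j <= M) -> skellam X Y v <= M.
Proof.
  intro HM. unfold skellam.
  rewrite <- (Rmult_1_r M), <- (is_series_unique _ _ (is_series_poisson Y)), <- Series_scal_l.
  apply Series_le.
  - intro k. split; [apply skellam_term_ge0|].
    apply Rmult_le_compat_r; [apply poisson_ge0, HY | apply HM].
  - exists (M * 1). exact (is_series_scal_l M _ _ (is_series_poisson Y)).
Qed.

(* Keep only the term k = floor(Y), where both weights sit at their mode. *)
Lemma skellam_sq_ge : X = Y + INR v ->
  / (exp 4 ^ 2 * ((X + 1) * (Y + 1))) <= skellam X Y v ^ 2.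
Proof.
  intro HXY. destruct (nfloor_ex Y HY) as [m Hm].
  assert (He4 : 0 < exp 4) by apply exp_pos.
  assert (HX' : INR (v + m) <= X < INR (v + m) + 1) by (rewrite plus_INR; lra).
  assert (Hterm : poisson X (v + m) * poisson Y m <= skellam X Y v)
    by exact (Series_ge_term _ m skellam_term_ge0 ex_series_skellam).
  apply Rle_trans with ((poisson X (v + m) * poisson Y m) ^ 2).
  - rewrite Rpow_mult_distr.
    replace (/ (exp 4 ^ 2 * ((X + 1) * (Y + 1))))
      with (/ (exp 4 * (X + 1)) * / (exp 4 * (Y + 1))) by (simpl; field; repeat split; lra).
    assert (HpX := poisson_floor_sq_ge X (v + m) HX').
    assert (HpY := poisson_floor_sq_ge Y m Hm).
    apply Rmult_le_compat; try assumption; apply Rlt_le, Rinv_0_lt_compat; nra.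
  - apply pow_incr. split; [apply skellam_term_ge0 | exact Hterm].
Qed.

End Skellam.

Lemma inner_term_poisson (v k : nat) (lam X Y r : R) :
  r * X = lam / 2 -> X * Y = lam ^ 2 / 4 ->
  inner_term v lam k = exp (X + Y) * r ^ v * (poisson X (v + k) * poisson Y k).
Proof.
  intros HrX HXY.
  assert (Hpow : r ^ v * X ^ (v + k) * Y ^ k = lam ^ (v + 2 * k) / 2 ^ (v + 2 * k)).
  { rewrite pow_add, <- Rmult_assoc, <- Rpow_mult_distr, HrX, Rmult_assoc,
      <- Rpow_mult_distr, HXY.
    replace (lam ^ 2 / 4) with ((lam / 2) ^ 2) by field.
    rewrite <- pow_mult, <- pow_add. unfold Rdiv. rewrite Rpow_mult_distr, pow_inv. reflexivity. }
  unfold inner_term, Binomial.C, poisson. cbv zeta.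
  replace (v + 2 * k - k)%nat with (v + k)%nat by lia.
  rewrite exp_plus, !exp_Ropp.
  assert (exp X <> 0) by apply Rgt_not_eq, exp_pos.
  assert (exp Y <> 0) by apply Rgt_not_eq, exp_pos.
  assert (2 ^ (v + 2 * k) <> 0) by (apply pow_nonzero; lra).
  assert (F1 := INR_fact_neq_0 (v + 2 * k)). assert (F2 := INR_fact_neq_0 (v + k)).
  assert (F3 := INR_fact_neq_0 k).
  transitivity (lam ^ (v + 2 * k) / 2 ^ (v + 2 * k)
                / (INR (Factorial.fact k) * INR (Factorial.fact (v + k)))).
  { field. repeat split; assumption. }
  rewrite <- Hpow. field. repeat split; assumption.
Qed.

Section BesselSum.

Variables (v : nat) (lam : R).

Let s := sqrt (INR v ^ 2 + lam ^ 2).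
Let X := (s + INR v) / 2.
Let Y := (s - INR v) / 2.

Let s_sq : s * s = INR v ^ 2 + lam ^ 2.
Proof. apply sqrt_sqrt. assert (HV := pos_INR v). nra. Qed.

Let s_bounds : 0 < lam -> INR v < s /\ lam <= s /\ s <= INR v + lam.
Proof.
  intro Hlam. assert (HV := pos_INR v). assert (Hs := s_sq).
  assert (0 <= s) by apply sqrt_pos.
  repeat split; nra.
Qed.

Let X_Y_bounds : 0 < lam -> lam / 2 <= X /\ 0 < Y.
Proof.
  intro Hlam. assert (HV := pos_INR v). destruct (s_bounds Hlam) as [HVs [Hls _]].
  unfold X, Y. split; lra.
Qed.

Let mul_X_Y : X * Y = lam ^ 2 / 4.
Proof.
  unfold X, Y. replace ((s + INR v) / 2 * ((s - INR v) / 2)) with ((s * s - INR v ^ 2) / 4)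
    by field.
  rewrite s_sq. field.
Qed.

Lemma inner_sum_eq_skellam : 0 < lam -> inner_sum v lam = exp (Psi v lam) * skellam X Y v.
Proof.
  intro Hlam. destruct (s_bounds Hlam) as [HVs _].
  set (r := (s - INR v) / lam).
  assert (Hr : 0 < r) by (apply Rdiv_lt_0_compat; lra).
  assert (HPsi : exp (Psi v lam) = exp (X + Y) * r ^ v).
  { unfold Psi. fold s. rewrite exp_plus, pow_exp_ln by exact Hr.
    f_equal. unfold X, Y. f_equal. field. }
  unfold inner_sum, skellam. rewrite HPsi, <- Series_scal_l.
  apply Series_ext. intro k. apply inner_term_poisson; [|exact mul_X_Y].
  unfold r, X. replace ((s - INR v) / lam * ((s + INR v) / 2)) with ((s * s - INR v ^ 2) / (2 * lam))
    by (field; lra).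
  rewrite s_sq. field. lra.
Qed.

Lemma inner_sum_le : 0 < lam -> inner_sum v lam <= exp (Psi v lam).
Proof.
  intro Hlam. destruct (X_Y_bounds Hlam) as [HX HY].
  rewrite inner_sum_eq_skellam by exact Hlam.
  rewrite <- (Rmult_1_r (exp (Psi v lam))) at 2.
  apply Rmult_le_compat_l; [apply Rlt_le, exp_pos|].
  apply skellam_le; try lra.
  intro j. apply poisson_le_1. lra.
Qed.

Lemma inner_sum_le_inv_sqrt : 0 < lam -> inner_sum v lam <= 2 / sqrt lam * exp (Psi v lam).
Proof.
  intro Hlam. destruct (X_Y_bounds Hlam) as [HX HY].
  assert (Hsq : 0 < sqrt lam) by (apply sqrt_lt_R0, Hlam).
  rewrite inner_sum_eq_skellam, Rmult_comm by exact Hlam.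
  apply Rmult_le_compat_r; [apply Rlt_le, exp_pos|].
  apply skellam_le; try lra.
  intro j. apply Rsqr_incr_0_var; [|apply Rlt_le, Rdiv_lt_0_compat; lra].
  rewrite !Rsqr_pow2.
  apply Rle_trans with (2 / X); [apply poisson_sq_le; lra|].
  unfold Rdiv. rewrite Rpow_mult_distr, pow_inv, <- (Rsqr_pow2 (sqrt lam)), Rsqr_sqrt by lra.
  apply Rle_trans with (2 * / (lam / 2)); [apply Rmult_le_compat_l, Rinv_le_contravar; lra|].
  right. field. lra.
Qed.

Lemma inner_sum_ge : 1 / 2 <= lam ->
  / (3 * exp 4 * (INR v + lam)) * exp (Psi v lam) <= inner_sum v lam.
Proof.
  intro Hlam. destruct (s_bounds ltac:(lra)) as [_ [_ HsL]].
  destruct (X_Y_bounds ltac:(lra)) as [HX HY].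
  assert (HV := pos_INR v). set (L := INR v + lam) in *.
  assert (He4 : 0 < exp 4) by apply exp_pos.
  assert (HXY1 : (X + 1) * (Y + 1) <= 9 * L ^ 2).
  { replace ((X + 1) * (Y + 1)) with (X * Y + s + 1) by (unfold X, Y; field).
    rewrite mul_X_Y. unfold L in *. nra. }
  assert (Hsk := skellam_sq_ge X Y v ltac:(lra) ltac:(lra) ltac:(unfold X, Y; field)).
  rewrite inner_sum_eq_skellam, Rmult_comm by lra.
  apply Rmult_le_compat_l; [apply Rlt_le, exp_pos|].
  apply Rsqr_incr_0_var; [rewrite !Rsqr_pow2|].
  - apply Rle_trans with (/ (exp 4 ^ 2 * ((X + 1) * (Y + 1)))); [|exact Hsk].
    rewrite pow_inv. apply Rinv_le_contravar.
    + apply Rmult_lt_0_compat; [apply pow_lt, He4 | nra].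
    + replace ((3 * exp 4 * L) ^ 2) with (exp 4 ^ 2 * (9 * L ^ 2)) by ring.
      apply Rmult_le_compat_l; [apply pow_le; lra | exact HXY1].
  - apply Series_ge0; [apply skellam_term_ge0 | apply ex_series_skellam]; lra.
Qed.

End BesselSum.

Lemma signed_A_coef (v : nat) (lam : R) :
  (-1) ^ v * A_coef v lam = 2 * exp (- lam) * inner_sum v lam.
Proof.
  unfold A_coef. rewrite <- (Rmult_1_l (2 * exp (- lam) * inner_sum v lam)).
  rewrite <- (pow1 v). replace 1 with ((-1) * (-1)) at 1 by ring.
  rewrite Rpow_mult_distr. ring.
Qed.

Theorem proposition4p1 :
  exists Cst cst : R, 0 < Cst /\ 0 < cst /\
  forall (v : nat) (lam : R), 1 / 2 <= lam ->
    ( (cst * / (INR v + lam) * exp (Psi v lam - lam) <= (-1) ^ v * A_coef v lam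
       /\ (-1) ^ v * A_coef v lam <= Cst * (INR v + lam) * exp (Psi v lam - lam))
      /\
      (cst * / (INR v + lam) * exp (Psi v lam + lam) <= B_coef v lam
       /\ B_coef v lam <= Cst * (INR v + lam) * exp (Psi v lam + lam)) )
    /\
    (INR v <= lam ->
       cst * / (INR v + lam) * exp (Psi v lam - lam) <= (-1) ^ v * A_coef v lam
       /\ (-1) ^ v * A_coef v lam <= Cst * / sqrt lam * exp (Psi v lam - lam)).
Proof.
  assert (He4 : 0 < exp 4) by apply exp_pos.
  exists 4, (2 / (3 * exp 4)). split; [lra|]. split; [apply Rdiv_lt_0_compat; lra|].
  intros v lam Hlam.
  rewrite signed_A_coef. unfold B_coef, Rminus. rewrite !exp_plus.
  assert (HL : 1 / 2 <= INR v + lam) by (assert (HV := pos_INR v); lra).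
  assert (Hge := inner_sum_ge v lam Hlam).
  assert (Hle := inner_sum_le v lam ltac:(lra)).
  assert (Hle' := inner_sum_le_inv_sqrt v lam ltac:(lra)).
  set (S := inner_sum v lam) in *. set (P := exp (Psi v lam)) in *.
  set (L := INR v + lam) in *.
  assert (HP : 0 < P) by apply exp_pos.
  replace (2 / (3 * exp 4) * / L) with (2 * / (3 * exp 4 * L)) by (field; lra).
  assert (Hlow : forall w, 0 < w -> 2 * / (3 * exp 4 * L) * (P * w) <= 2 * w * S).
  { intros w Hw. replace (2 * / (3 * exp 4 * L) * (P * w)) with (2 * w * (/ (3 * exp 4 * L) * P))
      by ring.
    apply Rmult_le_compat_l; [lra | exact Hge]. }
  assert (Hup : forall w c, 0 < w -> 2 * S <= c * P -> 2 * w * S <= c * (P * w)).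
  { intros w c Hw HS. replace (c * (P * w)) with (w * (c * P)) by ring.
    replace (2 * w * S) with (w * (2 * S)) by ring. apply Rmult_le_compat_l; lra. }
  assert (HupL : 2 * S <= 4 * L * P) by nra.
  assert (Hupsqrt : 2 * S <= 4 * / sqrt lam * P) by (unfold Rdiv in Hle'; lra).
  assert (Hm := exp_pos (- lam)). assert (Hp := exp_pos lam).
  repeat split; intros; auto.
Qed.
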